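(* Let $k$ be an odd integer with $k\ge 5$, let $D$ be a strong $k$-quasi-transitive digraph with $\mathrm{diam}(D)\ge k+2$, let $u,v\in V(D)$ with $d(u,v)=k+2$, and let $P=x_0x_1\ldots x_{k+2}$ be a shortest $(u,v)$-path (so $x_0=u$, $x_{k+2}=v$). Let $O(P)=\{x_1,x_3,\ldots,x_{k+2}\}$ and $E(P)=\{x_0,x_2,\ldots,x_{k+1}\}$. Let $x_t,x_s\in V(P)$ with $s>t$. Then: (1) every vertex of $O(P)$ is adjacent to every vertex of $E(P)$; i.e. $D[V(P)]$ contains as a subdigraph a semicomplete bipartite digraph with bipartition $(O(P),E(P))$; (2) if $s$ and $t$ have different parity, there is a path of length $k-2$ from $x_s$ to $x_t$ in $D[V(P)]$; moreover, for any two distinct vertices $x,y\in V(D)\setminus V(P)$, if $y\rightarrow x_s$ and $x_t\rightarrow x$, then $x$ and $y$ are adjacent; (3) if $s$ and $t$ have the same parity, there is a path of length $k-1$ from $x_s$ to $x_t$ in $D[V(P)]$; moreover, for any $x\in V(D)\setminus V(P)$: if $x\rightarrow x_s$, then $x$ and $x_t$ are adjacent, and $x\rightarrow x_t$ if $s\ge t+4$; if $x_t\rightarrow x$, then $x$ and $x_s$ are adjacent, and $x_s\rightarrow x$ if $s\ge t+4$.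
   Context: All digraphs are finite, without loops or multiple arcs (opposite arcs allowed). $x\rightarrow y$ means $xy\in A(D)$; $x,y$ are adjacent if $x\rightarrow y$ or $y\rightarrow x$. For $k\ge 2$, $D$ is $k$-quasi-transitive if for every path $x_0x_1\ldots x_k$ of length $k$, $x_0$ and $x_k$ are adjacent. $d(x,y)$ is the length of a shortest $(x,y)$-path, $\mathrm{diam}(D)=\max_{x,y}d(x,y)$. $D[S]$ is the induced subdigraph. A semicomplete bipartite digraph has a bipartition $(X,Y)$ with no arcs inside the parts and every vertex of $X$ adjacent to every vertex of $Y$. *)

From mathcomp Require Import all_boot.
Set Implicit Arguments. Unset Strict Implicit. Unset Printing Implicit Defensive.

(* A digraph on a finite vertex type V is given by its arc relation A:
   x -> y  iff  A x y.  No loops: A is irreflexive. Opposite arcs allowed. *)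
Definition loopless (V : finType) (A : rel V) : Prop := forall x, ~~ A x x.

Definition adj (V : finType) (A : rel V) (x y : V) : bool := A x y || A y x.

(* A (directed) path is a nonempty duplicate-free sequence of vertices with
   consecutive arcs; its length is (size - 1). *)
Definition dpath (V : finType) (A : rel V) (s : seq V) : bool :=
  [&& s != [::], uniq s & sorted A s].

Definition path_in (V : finType) (A : rel V) (S : pred V) (x y : V) (n : nat) : Prop :=
  exists s : seq V, [/\ dpath A (x :: s), size s = n, last x s = y & all S (x :: s)].

Definition has_path (V : finType) (A : rel V) (x y : V) (n : nat) : Prop :=
  path_in A predT x y n.

Definition k_quasi_transitive (V : finType) (A : rel V) (k : nat) : Prop :=
  forall (x : V) (s : seq V), dpath A (x :: s) -> size s = k -> adj A x (last x s).

Definition strong (V : finType) (A : rel V) : Prop :=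
  forall x y : V, exists n, has_path A x y n.

Definition is_dist (V : finType) (A : rel V) (x y : V) (n : nat) : Prop :=
  has_path A x y n /\ forall m, has_path A x y m -> n <= m.

Definition diam_ge (V : finType) (A : rel V) (m : nat) : Prop :=
  exists x y n, is_dist A x y n /\ m <= n.

(* Since P is a shortest path it has no forward chord x_i -> x_j (j >= i + 2)
   and, more generally, no detour outside P shorter than the segment it
   bypasses; so whenever k-quasi-transitivity makes x_i and x_j adjacent with
   j >= i + 2, the arc is x_j -> x_i.  Paths of length k inside P are built by
   running forward along segments of P and jumping back along arcs already
   found: x_0 ... x_k gives x_k -> x_0 (likewise x_{k+1} -> x_1, x_{k+2} -> x_2),
   then x_{k+2} -> x_0, then by two inductions x_{k+2} -> x_a for even a and
   x_b -> x_0 for odd b, and finally x_j -> x_i whenever j - i is odd and at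
   least 3, which is (1).  The same segment-and-jump paths, now of length k - 2
   or k - 1, give the paths of (2) and (3); prolonging them through outside
   vertices to length k and applying k-quasi-transitivity gives the
   adjacencies, oriented in (3) again by the absence of short detours. *)

From mathcomp Require Import all_boot zify.
Set Implicit Arguments. Unset Strict Implicit. Unset Printing Implicit Defensive.

Lemma split2_nth (T : Type) (x0 : T) (s : seq T) i j : i < j < size s ->
  s = take i s ++ nth x0 s i :: drop i.+1 (take j s) ++ nth x0 s j :: drop j.+1 s.
Proof.
case/andP=> ij js; have ijs : i < size (take j s) by rewrite size_takel // ltnW.
rewrite -[nth x0 s i](nth_take x0 ij) -[take i s](take_takel s (ltnW ij)).
rewrite -cat_cons -(drop_nth x0 ijs) catA cat_take_drop.
by rewrite -(drop_nth x0 js) cat_take_drop.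
Qed.

Lemma last_iota l m : last l (iota l.+1 m) = l + m.
Proof. by elim: m l => [|m IH] l /=; rewrite ?addn0 // IH addSn addnS. Qed.

Lemma notin_all (T : eqType) (S : pred T) s a : all S s -> ~~ S a -> a \notin s.
Proof. by move=> /allP sS; apply: contra (sS a). Qed.

Section Dpaths.
Variables (V : finType) (A : rel V).

Lemma dpath_cons a x s : dpath A (x :: s) -> a \notin x :: s -> A a x ->
  dpath A (a :: x :: s).
Proof. by case/and3P=> _ us ps na ax; rewrite /dpath cons_uniq na us /= ax. Qed.

Lemma dpath_rcons x s a : dpath A (x :: s) -> a \notin x :: s -> A (last x s) a ->
  dpath A (x :: rcons s a).
Proof.
case/and3P=> _ us ps na la; rewrite /dpath -rcons_cons rcons_uniq na us.
by rewrite /= rcons_path; apply/andP.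
Qed.

Lemma dpath_splice (p m q w : seq V) a b :
  dpath A (p ++ a :: m ++ b :: q) -> uniq w ->
  all [pred y | y \notin p ++ a :: m ++ b :: q] w -> path A a (rcons w b) ->
  dpath A (p ++ a :: w ++ b :: q).
Proof.
case/and3P=> _ uP sP uw outw pw; apply/and3P; split; first by case: (p).
- have sub : subseq (p ++ a :: b :: q) (p ++ a :: m ++ b :: q).
    by rewrite subseq_cat2l -cat1s -[a :: _ ++ _]cat1s subseq_cat2l suffix_subseq.
  rewrite -cat1s catA uniq_catCA cat_uniq uw -catA cat1s (subseq_uniq sub) //=.
  rewrite andbT; apply/hasPn=> y /(mem_subseq sub) yP.
  by apply: contraL yP => /(allP outw).
- move: sP; rewrite !sorted_cat_cons => /andP[-> /=].
  rewrite !cat_path => /and3P[_ _ pq].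
  by move: pw; rewrite rcons_path => /andP[-> lb] /=; rewrite lb.
Qed.

Lemma adj_sym : symmetric (adj A).
Proof. by move=> x y; rewrite /adj orbC. Qed.

End Dpaths.

Section ShortestPath.
Variables (V : finType) (A : rel V) (u v : V) (P : seq V).
Hypotheses (dist_uv : is_dist A u v (size P).-1) (dpath_P : dpath A P)
  (head_P : head u P = u) (last_P : last u P = v).

Lemma dpath_size_ge s : dpath A s -> head u s = u -> last u s = v ->
  (size P).-1 <= (size s).-1.
Proof.
case: s => [|y s]; first by case/and3P.
by move=> ds /= yu ls; subst y; apply: dist_uv.2; exists s; split; rewrite ?all_predT.
Qed.

Lemma shortcut_bound i j w : i < j < size P -> uniq w ->
  all [pred y | y \notin P] w -> path A (nth u P i) (rcons w (nth u P j)) ->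
  j <= i + (size w).+1.
Proof.
move=> ijP uw outw pw; have eP := split2_nth u ijP.
set s := take i P ++ nth u P i :: w ++ nth u P j :: drop j.+1 P.
have ds : dpath A s by apply: (dpath_splice (m := drop i.+1 (take j P))); rewrite -?eP.
have hs : head u s = u.
  by rewrite -head_P /s; case: (P) => [|z P']; case: (i).
have ls : last u s = v by rewrite -last_P {1}eP /s !last_cat /= !last_cat.
have := dpath_size_ge ds hs ls.
case/andP: ijP => ij jP; rewrite /s size_cat /= size_cat /= size_takel ?size_drop; lia.
Qed.

End ShortestPath.

Section QuasiTransitive.
Variables (V : finType) (A : rel V) (k : nat) (S : pred V).
Hypothesis kqt : k_quasi_transitive A k.

Lemma kqt_adj_cons y z a n : path_in A S y z n -> n.+1 = k -> ~~ S a ->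
  A a y -> adj A a z.
Proof.
case=> s [ds <- <- allS] sk Sa ay; rewrite -[last y s]/(last a (y :: s)).
by apply: kqt; [exact: dpath_cons ds (notin_all allS Sa) ay | rewrite /= sk].
Qed.

Lemma kqt_adj_rcons y z a n : path_in A S y z n -> n.+1 = k -> ~~ S a ->
  A z a -> adj A y a.
Proof.
case=> s [ds <- <- allS] sk Sa za; rewrite -(last_rcons y s a).
by apply: kqt; [exact: dpath_rcons ds (notin_all allS Sa) za | rewrite size_rcons].
Qed.

Lemma kqt_adj_around b y z a n : path_in A S y z n -> n.+2 = k ->
  ~~ S a -> ~~ S b -> a != b -> A b y -> A z a -> adj A b a.
Proof.
case=> s [ds <- <- allS] sk Sa Sb ab b_to_y z_to_a.
have na : a \notin y :: s := notin_all allS Sa.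
have nb : b \notin y :: rcons s a.
  by rewrite -rcons_cons mem_rcons inE negb_or eq_sym ab (notin_all allS Sb).
rewrite -[a](last_rcons y s a) -[last y _]/(last b (y :: rcons s a)).
by apply: kqt; [apply: dpath_cons => //; apply: dpath_rcons | rewrite /= size_rcons].
Qed.

End QuasiTransitive.

Section Geodesic.
Variables (V : finType) (A : rel V) (k : nat) (u v : V) (P : seq V).
Hypotheses (k_odd : odd k) (k_ge5 : 5 <= k) (kqt : k_quasi_transitive A k)
  (dist_uv : is_dist A u v (k + 2)) (dpath_P : dpath A P)
  (size_P : size P = k + 3) (head_P : head u P = u) (last_P : last u P = v).

Local Notation x := (nth u P).

Lemma arc_succ i : i < k.+2 -> A (x i) (x i.+1).
Proof.
by move=> ik; case/and3P: dpath_P => _ _ /(sortedP u); apply; rewrite size_P; lia.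
Qed.

Lemma shortcut i j w : i < j <= k.+2 -> uniq w -> all [pred y | y \notin P] w ->
  path A (x i) (rcons w (x j)) -> j <= i + (size w).+1.
Proof.
have dist : is_dist A u v (size P).-1 by rewrite size_P addnS.
move=> ij; apply: (shortcut_bound dist dpath_P head_P last_P); rewrite size_P; lia.
Qed.

Lemma no_forward_chord i j : i + 2 <= j <= k.+2 -> ~~ A (x i) (x j).
Proof.
move=> ij; apply/negP=> ij_arc.
by have := @shortcut i j [::]; rewrite /= ij_arc => /(_ _ isT isT isT); lia.
Qed.

Lemma arc_back_of_adj i j : adj A (x i) (x j) -> i + 2 <= j <= k.+2 -> A (x j) (x i).
Proof. by move=> /orP[ij | //] /no_forward_chord; rewrite ij. Qed.

(* The window [lo, hi] makes paths over disjoint windows concatenate into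
   duplicate-free ones. *)
Definition index_path (lo hi i j n : nat) : Prop :=
  exists s : seq nat, [/\ path (relpre x A) i s, uniq (i :: s),
    all [pred m | lo <= m <= hi] (i :: s), last i s = j & size s = n].

Lemma path_iota l m : l + m <= k.+2 -> path (relpre x A) l (iota l.+1 m).
Proof. by elim: m l => [|m IH] l lm //=; rewrite arc_succ ?IH //; lia. Qed.

Lemma index_path_seg l h n : l <= h <= k.+2 -> n = h - l -> index_path l h l h n.
Proof.
move=> lh ->; exists (iota l.+1 (h - l)); split.
- by apply: path_iota; lia.
- exact: (iota_uniq l (h - l).+1).
- by apply/allP=> m; rewrite -[l :: _]/(iota l (h - l).+1) mem_iota /=; lia.
- by rewrite last_iota; lia.
- exact: size_iota.
Qed.

Lemma index_path_cat lo1 hi1 i1 j1 n1 lo2 hi2 i2 j2 n2 :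
  index_path lo1 hi1 i1 j1 n1 -> index_path lo2 hi2 i2 j2 n2 ->
  hi2 < lo1 -> A (x j1) (x i2) -> index_path lo2 hi1 i1 j2 (n1 + n2).+1.
Proof.
move=> [s1 [p1 u1 /allP a1 l1 n1s]] [s2 [p2 u2 /allP a2 l2 n2s]] h21 arc.
have := a1 i1 (mem_head _ _); have := a2 i2 (mem_head _ _) => /= b2 b1.
exists (s1 ++ i2 :: s2); split.
- by rewrite cat_path p1 l1 /= arc.
- rewrite -cat_cons cat_uniq u1 u2 andbT; apply/hasPn=> m /a2 /= m2.
  by apply/negP=> /a1 /=; lia.
- rewrite -cat_cons all_cat; apply/andP; split; apply/allP=> m.
  + by move/a1 => /=; lia.
  + by move/a2 => /=; lia.
- by rewrite last_cat.
- by rewrite size_cat /= n1s n2s addnS.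
Qed.

Lemma index_path_seg2 s h l t n : A (x h) (x l) -> s <= h <= k.+2 -> l <= t < s ->
  n = (h - s) + (t - l) + 1 -> index_path l h s t n.
Proof.
move=> arc sh lts ->; rewrite addn1.
by apply: (index_path_cat (index_path_seg _ (erefl _))
  (index_path_seg _ (erefl _))) arc; lia.
Qed.

Lemma index_path_seg3 s h a b l t n : A (x h) (x a) -> A (x b) (x l) ->
  s <= h <= k.+2 -> a <= b < s -> l <= t < a ->
  n = (h - s) + (b - a) + (t - l) + 2 -> index_path l h s t n.
Proof.
move=> arc1 arc2 sh abs lta ->.
have -> : h - s + (b - a) + (t - l) + 2 = (h - s + (b - a + (t - l) + 1)).+1 by lia.
apply: (index_path_cat (index_path_seg _ (erefl _))
  (index_path_seg2 arc2 _ _ (erefl _)) _ arc1); lia.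
Qed.

Lemma nth_inj i j : i <= k.+2 -> j <= k.+2 -> x i = x j -> i = j.
Proof.
move=> ik jk /eqP; case/and3P: dpath_P => _ uP _.
by rewrite nth_uniq ?size_P; [move/eqP | lia | lia | ].
Qed.

Lemma index_path_path_in lo hi i j n : index_path lo hi i j n -> hi <= k.+2 ->
  path_in A (mem P) (x i) (x j) n.
Proof.
case=> s [ps us /allP bs ls ns] hik; exists (map x s); split.
- apply/and3P; split=> //; last by rewrite /= path_map.
  rewrite -map_cons map_inj_in_uniq // => m1 m2 /bs /= b1 /bs /= b2.
  by apply: nth_inj; lia.
- by rewrite size_map.
- by rewrite last_map ls.
- apply/allP=> y; rewrite -map_cons => /mapP[m /bs /= bm ->].
  by rewrite /= mem_nth // size_P; lia.
Qed.

Lemma index_path_adj lo hi i j : index_path lo hi i j k -> hi <= k.+2 ->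
  adj A (x i) (x j).
Proof. by move=> /index_path_path_in ip /ip [s [ds ss <- _]]; apply: kqt. Qed.

Lemma index_path_back_arc lo hi i j : index_path lo hi i j k -> hi <= k.+2 ->
  j + 2 <= i -> A (x i) (x j).
Proof.
move=> ip hik ji; have [s [_ _ /allP bs _ _]] := ip.
have := bs i (mem_head _ _) => /= bi.
by apply: arc_back_of_adj; [rewrite adj_sym; apply: index_path_adj ip _ | lia].
Qed.

Lemma arc_back_by_k i : i <= 2 -> A (x (i + k)) (x i).
Proof.
by move=> i2; apply: arc_back_of_adj (index_path_adj (index_path_seg _ _) _) _; lia.
Qed.

Lemma arc_last_first : A (x k.+2) (x 0).
Proof.
have arc2 := arc_back_by_k (i := 2) isT; have arc0 := arc_back_by_k (i := 0) isT.
by apply: index_path_back_arc (index_path_seg3 arc2 arc0 _ _ _ _) _ _; lia.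
Qed.

Lemma arc_to_first b : odd b -> 3 <= b <= k.+2 -> A (x b) (x 0).
Proof.
elim/ltn_ind: b => b IH ob bk; case: (ltnP b 5) => b5.
  by apply: index_path_back_arc (index_path_seg2 arc_last_first _ _ _) _ _; lia.
by apply: index_path_back_arc
  (index_path_seg3 (arc_back_by_k (i := 2) isT) (IH (b - 2) _ _ _) _ _ _ _) _ _; lia.
Qed.

Lemma arc_from_last a : ~~ odd a -> a <= k - 1 -> A (x k.+2) (x a).
Proof.
move=> ea ak; have [d] : exists d, a + d = k - 1 by exists (k - 1 - a); lia.
elim/ltn_ind: d a ea ak => d IH a ea ak ad; case: (ltnP d 2) => d2.
  by apply: index_path_back_arc (index_path_seg2 arc_last_first _ _ _) _ _; lia.
have arc0 := arc_back_by_k (i := 0) isT.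
by apply: index_path_back_arc
  (index_path_seg3 (IH (d - 2) _ (a + 2) _ _ _) arc0 _ _ _ _) _ _; lia.
Qed.

(* x_s ... x_{k+2} -> x_a ... x_{a+c} -> x_0 ... x_t, with a the least even
   index above t. *)
Lemma index_path_detour s t c n : odd c -> t.+2 - odd t + c < s <= k.+2 ->
  n = (k.+2 - s) + c + t + 2 -> index_path 0 k.+2 s t n.
Proof.
move=> oc cs ->.
by apply: (index_path_seg3 (arc_from_last (a := t.+2 - odd t) _ _)
  (arc_to_first (b := t.+2 - odd t + c) _ _)); lia.
Qed.

Lemma arc_back_odd i j : i + 3 <= j <= k.+2 -> odd (j - i) -> A (x j) (x i).
Proof.
move=> ij oji; case: (ltnP j (i + 5)) => ji.
  by apply: index_path_back_arc (index_path_seg2 arc_last_first _ _ _) _ _; lia.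
by apply: index_path_back_arc (index_path_detour (c := j - i - 4) _ _ _) _ _; lia.
Qed.

Lemma adj_odd_gap i j : i < j <= k.+2 -> odd (j - i) -> adj A (x i) (x j).
Proof.
move=> ij oji; apply/orP; case: (eqVneq j i.+1) => [-> | ne].
  by left; apply: arc_succ; lia.
by right; apply: arc_back_odd; lia.
Qed.

Lemma adj_odd_even i j : i < k + 3 -> j < k + 3 -> odd i -> ~~ odd j ->
  adj A (x i) (x j).
Proof.
move=> ik jk oi ej; case: (ltngtP i j) => [ij | ji | ij].
- by apply: adj_odd_gap; lia.
- by rewrite adj_sym; apply: adj_odd_gap; lia.
- by move: oi ej; rewrite ij => ->.
Qed.

Lemma path_in_odd_gap t s : t < s < k + 3 -> odd s != odd t ->
  path_in A (mem P) (x s) (x t) (k - 2).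
Proof.
move=> ts par; case: (ltnP (s - t) 7) => gap.
  (* x_s ... x_h -> x_l ... x_t with h - l = k + (s - t) - 3 *)
  apply: (index_path_path_in (index_path_seg2 (arc_back_odd
    (i := minn t (5 - (s - t))) (j := minn t (5 - (s - t)) + k + (s - t) - 3) _ _)
    _ _ _)); lia.
by apply: (index_path_path_in (index_path_detour (c := s - t - 6) _ _ _)); lia.
Qed.

Lemma path_in_even_gap t s : t < s < k + 3 -> odd s = odd t ->
  path_in A (mem P) (x s) (x t) (k - 1).
Proof.
move=> ts par; case: (ltnP (s - t) 6) => gap.
  (* x_s ... x_h -> x_l ... x_t with h - l = k + (s - t) - 2 *)
  apply: (index_path_path_in (index_path_seg2 (arc_back_odd
    (i := minn t (4 - (s - t))) (j := minn t (4 - (s - t)) + k + (s - t) - 2) _ _)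
    _ _ _)); lia.
by apply: (index_path_path_in (index_path_detour (c := s - t - 5) _ _ _)); lia.
Qed.

Lemma outside_detour_short t s a : a \notin P -> A (x t) a -> A a (x s) ->
  t < s <= k.+2 -> s <= t + 2.
Proof.
by move=> aP xta axs ts; apply: (@shortcut t s [:: a]) => //=; rewrite ?aP ?xta ?axs.
Qed.

Lemma adj_around_odd_gap t s a b : t < s < k + 3 -> odd s != odd t ->
  a \notin P -> b \notin P -> a != b -> A b (x s) -> A (x t) a -> adj A a b.
Proof.
move=> ts par aP bP ab bxs xta; rewrite adj_sym.
by apply: (kqt_adj_around kqt (path_in_odd_gap ts par)) => //; lia.
Qed.

Lemma adj_into_even_gap t s a : t < s < k + 3 -> odd s = odd t -> a \notin P ->
  A a (x s) -> adj A a (x t) /\ (t + 4 <= s -> A a (x t)).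
Proof.
move=> ts par aP axs.
have a_xt : adj A a (x t).
  by apply: (kqt_adj_cons kqt (path_in_even_gap ts par)) => //; lia.
split=> // st; case/orP: a_xt => // xta.
by have := outside_detour_short aP xta axs; lia.
Qed.

Lemma adj_from_even_gap t s a : t < s < k + 3 -> odd s = odd t -> a \notin P ->
  A (x t) a -> adj A a (x s) /\ (t + 4 <= s -> A (x s) a).
Proof.
move=> ts par aP xta.
have xs_a : adj A (x s) a.
  by apply: (kqt_adj_rcons kqt (path_in_even_gap ts par)) => //; lia.
rewrite adj_sym; split=> // st; case/orP: xs_a => // axs.
by have := outside_detour_short aP xta axs; lia.
Qed.

End Geodesic.

Theorem lemma2p3 (V : finType) (A : rel V) (k : nat) (u v : V) (P : seq V) :
  loopless A -> odd k -> 5 <= k ->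
  strong A -> k_quasi_transitive A k -> diam_ge A (k + 2) ->
  is_dist A u v (k + 2) ->
  dpath A P -> size P = k + 3 -> head u P = u -> last u P = v ->
  let x := fun i => nth u P i in
  (* (1) *)
  (forall i j, i < k + 3 -> j < k + 3 -> odd i -> ~~ odd j -> adj A (x i) (x j)) /\
  (forall t s, t < s -> s < k + 3 ->
     (* (2) *)
     (odd s != odd t ->
        path_in A (mem P) (x s) (x t) (k - 2) /\
        (forall a b : V, a \notin P -> b \notin P -> a != b ->
           A b (x s) -> A (x t) a -> adj A a b)) /\
     (* (3) *)
     (odd s = odd t ->
        path_in A (mem P) (x s) (x t) (k - 1) /\
        (forall a : V, a \notin P ->
           (A a (x s) -> adj A a (x t) /\ (t + 4 <= s -> A a (x t))) /\
           (A (x t) a -> adj A a (x s) /\ (t + 4 <= s -> A (x s) a))))).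
Proof.
move=> _ k_odd k_ge5 _ kqt _ dist_uv dpath_P size_P head_P last_P x.
split=> [i j *|t s ts sk]; first by apply: (adj_odd_even (k := k) (v := v)).
have tsk : t < s < k + 3 by rewrite ts.
split=> par; split.
- by apply: (path_in_odd_gap (k := k) (v := v)).
- by move=> a b aP bP ab; apply: (adj_around_odd_gap (k := k) (v := v)).
- by apply: (path_in_even_gap (k := k) (v := v)).
- move=> a aP; split.
  + by apply: (adj_into_even_gap (k := k) (v := v)).
  + by apply: (adj_from_even_gap (k := k) (v := v)).
Qed.
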